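(* Let $r\ge 2$ and $m$ be integers with $3\le m\le 6$. Then for every integer $n\ge m-1$, $$F_{n+2,r}\equiv F_{n,r}\pmod{2^m},$$ i.e. from the term of index $m-1$ onward the sequence $(F_{n,r}\bmod 2^m)_{n\ge0}$ is periodic with period $2$.
   Context: For positive integers $r\le m\le n$, $S_r(n,m)$ denotes the $r$-Stirling number of the second kind: the number of partitions of $\{1,\dots,n\}$ into $m$ non-empty blocks such that $1,\dots,r$ lie in pairwise distinct blocks. For a positive integer $r$ and integer $n\ge 0$, the $r$-Fubini number is $F_{n,r}=\sum_{k=0}^{n}(k+r)!\,S_r(n+r,k+r)$. *)

From mathcomp Require Import all_boot.
Set Implicit Arguments. Unset Strict Implicit. Unset Printing Implicit Defensive.

(* r-Stirling number of the second kind S_r(n,m): the number of partitions of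
   {1,...,n} (here modelled as 'I_n = {0,...,n-1}, with element i+1 <-> i)
   into m non-empty blocks such that 1,...,r (here 0,...,r-1) lie in pairwise
   distinct blocks.  MathComp's [partition P D] requires blocks non-empty,
   pairwise disjoint and covering D. *)
Definition rstirling2 (r n m : nat) : nat :=
  #|[set P : {set {set 'I_n}} |
      [&& partition P [set: 'I_n], #|P| == m &
          [forall i : 'I_n, forall j : 'I_n,
             [&& i < r, j < r & i != j] ==> (pblock P i != pblock P j)]]]|.

Definition rfubini (n r : nat) : nat :=
  \sum_(0 <= k < n.+1) (k + r)`! * rstirling2 r (n + r) (k + r).

(* Inserting the largest element into an r-partition of the smaller ones, either as a
   new singleton block or into one of the existing blocks (the latter only if it is not
   one of 1, ..., r), gives S_r(n+1,m+1) = [r <= n] (m+1) S_r(n,m+1) + S_r(n,m).  Hence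
   the summands a(n,k) = (k+r)! S_r(n+r,k+r) of F_{n,r} satisfy
   a(n+1,k) = (k+r) (a(n,k) + a(n,k-1)), and 2^6 divides a(n,k) once k + r >= 8.
   Modulo 2^6 the vector (a(n,0), ..., a(n,7)) therefore evolves under a fixed map; for
   r >= 8 it vanishes, and for 2 <= r <= 7 it is periodic from n = 5 on (period 8), so the
   congruences reduce to a finite computation. *)

From mathcomp Require Import all_boot zify.
Set Implicit Arguments. Unset Strict Implicit. Unset Printing Implicit Defensive.

Lemma card_pointed (T : finType) (A : {set {set T}}) :
  #|[set p : {set T} * T | (p.1 \in A) && (p.2 \in p.1)]| = \sum_(B in A) #|B|.
Proof.
rewrite -sum1_card; under eq_bigl => p do rewrite inE.
rewrite -(pair_big_dep (mem A) (fun B i => i \in B) (fun _ _ => 1)) /=.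
by apply: eq_bigr => B _; rewrite sum1_card.
Qed.

Section RestrictedPartitions.
Variables (T : finType) (v : T -> nat) (r : nat).

(* The elements of weight less than [r] play the role of 1, ..., r. *)
Definition low_separated (P : {set {set T}}) : bool :=
  [forall B in P, forall i in B, forall j in B, (v i < r) && (v j < r) ==> (i == j)].

Definition rpartitions (D : {set T}) (m : nat) : {set {set {set T}}} :=
  [set P | [&& partition P D, #|P| == m & low_separated P]].

Lemma low_separatedP (P : {set {set T}}) :
  reflect (forall B i j, B \in P -> i \in B -> j \in B -> v i < r -> v j < r -> i = j)
          (low_separated P).
Proof.
apply: (iffP forall_inP) => [sepP B i j BP iB jB ri rj | sepP B BP].
  by move/forall_inP/(_ i iB)/forall_inP/(_ j jB): (sepP B BP); rewrite ri rj => /eqP.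
apply/forall_inP => i iB; apply/forall_inP => j jB.
by apply/implyP => /andP[ri rj]; apply/eqP; apply: sepP BP iB jB ri rj.
Qed.

Lemma low_separated_coarser (P Q : {set {set T}}) :
  (forall B, B \in Q -> exists2 B', B' \in P & B \subset B') ->
  low_separated P -> low_separated Q.
Proof.
move=> coarser /low_separatedP sepP; apply/low_separatedP => B i j BQ iB jB.
have [B' B'P /subsetP sBB'] := coarser B BQ.
exact: sepP B' i j B'P (sBB' _ iB) (sBB' _ jB).
Qed.

Lemma card_rpartitions_set0 m : #|rpartitions set0 m| = (m == 0).
Proof.
have -> : rpartitions set0 m = if m == 0 then [set set0] else set0.
  apply/setP => P; rewrite !inE partition_set0.
  have [-> | nzP] := eqVneq P set0; last by case: (m == 0); rewrite ?inE ?(negbTE nzP).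
  rewrite cards0; case: m => [|m]; last by rewrite inE.
  by rewrite inE !eqxx /=; apply/low_separatedP => B i j; rewrite inE.
by case: (m == 0); rewrite ?cards1 ?cards0.
Qed.

Lemma card_rpartitions_setU1_0 x D : #|rpartitions (x |: D) 0| = 0.
Proof.
apply/eqP; rewrite cards_eq0; apply/eqP/setP => P; rewrite !inE.
apply/negbTE/negP => /and3P[partP]; rewrite cards_eq0 => /eqP P0 _.
have := cover_partition partP; rewrite P0 /cover big_set0 => /setP/(_ x).
by rewrite !inE eqxx.
Qed.

Section AddPoint.
Variables (x : T) (D : {set T}).
Hypothesis xD : x \notin D.

Let x_alone : {set {set {set T}}} := [set P : {set {set T}} | [set x] \in P].

Lemma setU1_setD (C : {set T}) : C \subset D -> (x |: C) :|: (D :\: C) = x |: D.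
Proof.
move=> /subsetP sCD; apply/setP => y; rewrite !inE.
by case: (y == x) => //=; case yC: (y \in C) => //=; rewrite sCD.
Qed.

Lemma singleton_notin_partition Q : partition Q D -> [set x] \notin Q.
Proof.
move=> partQ; apply/negP => /(partitionS partQ)/subsetP/(_ x).
by rewrite inE eqxx => /(_ isT); apply/negP.
Qed.

Lemma card_rpartitions_singleton m :
  #|rpartitions (x |: D) m.+1 :&: x_alone| = #|rpartitions D m|.
Proof.
have -> : rpartitions (x |: D) m.+1 :&: x_alone =
          (fun Q => [set x] |: Q) @: rpartitions D m.
  apply/setP => P; apply/idP/imsetP.
    rewrite !inE => /andP[/and3P[partP /eqP cardP sepP] xP].
    exists (P :\ [set x]); last by rewrite setD1K.
    rewrite !inE; apply/and3P; split.
    - by have := partitionD1 partP xP; rewrite setU1K.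
    - by move: cardP; rewrite (cardsD1 [set x] P) xP add1n => -[->].
    - by apply: low_separated_coarser sepP => B /setD1P[_ BP]; exists B.
  case=> Q; rewrite !inE => /and3P[partQ /eqP cardQ sepQ] ->.
  rewrite setU11 andbT; apply/and3P; split.
  - apply: partitionU1 partQ _ _; last by rewrite disjoints1.
    by apply/set0Pn; exists x; rewrite inE.
  - by rewrite cardsU1 (singleton_notin_partition partQ) cardQ.
  - apply/low_separatedP => B i j /setU1P[-> | BQ]; first by rewrite !inE => /eqP-> /eqP->.
    by move/low_separatedP: sepQ; apply.
rewrite card_in_imset // => Q1 Q2; rewrite !inE => /and3P[partQ1 _ _] /and3P[partQ2 _ _].
by move/(congr1 (fun P => P :\ [set x])); rewrite /= !setU1K ?singleton_notin_partition.
Qed.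

Definition join_block (p : {set {set T}} * {set T}) := (x |: p.2) |: (p.1 :\ p.2).

Definition split_block (P : {set {set T}}) :=
  ((pblock P x :\ x) |: (P :\ pblock P x), pblock P x :\ x).

Section JoinBlock.
Variables (Q : {set {set T}}) (C : {set T}).
Hypotheses (partQ : partition Q D) (CQ : C \in Q).

Let sCD : C \subset D := partitionS partQ CQ.

Let xC : x \notin C.
Proof. by apply: contra xD; apply/subsetP. Qed.

Lemma setU1_block_notin : x |: C \notin Q :\ C.
Proof.
apply/negP => /setD1P[_ /(partitionS partQ)/subsetP/(_ x)].
by rewrite setU11 => /(_ isT); apply/negP.
Qed.

Lemma partition_join_block : partition (join_block (Q, C)) (x |: D).
Proof.
rewrite /join_block -(setU1_setD sCD).
apply: partitionU1 (partitionD1 partQ CQ) _ _.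
  by apply/set0Pn; exists x; rewrite setU11.
rewrite -setI_eq0; apply/eqP/setP => y; rewrite !inE.
by case: (eqVneq y x) => [->|] /=; [rewrite (negbTE xD) andbF | case: (y \in C)].
Qed.

Lemma card_join_block : #|join_block (Q, C)| = #|Q|.
Proof. by rewrite cardsU1 setU1_block_notin (cardsD1 C Q) CQ. Qed.

Lemma pblock_join_block : pblock (join_block (Q, C)) x = x |: C.
Proof.
by apply: def_pblock (partition_trivIset partition_join_block) _ _; rewrite ?setU11.
Qed.

Lemma join_blockK : split_block (join_block (Q, C)) = (Q, C).
Proof.
by rewrite /split_block pblock_join_block setU1K // (setU1K setU1_block_notin) setD1K.
Qed.

Lemma singleton_notin_join_block : [set x] \notin join_block (Q, C).
Proof.
apply/negP; case/setU1P => [eqxC | /setD1P[_ xQ]].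
  have [y yC] := set0Pn _ (partition_neq0 partQ CQ).
  have := setU1r x yC; rewrite -eqxC inE => /eqP yx.
  by move: xC; rewrite -yx yC.
by move: (singleton_notin_partition partQ); rewrite xQ.
Qed.

End JoinBlock.

Section SplitBlock.
Variable P : {set {set T}}.
Hypotheses (partP : partition P (x |: D)) (xPn : [set x] \notin P).

Let C0 := pblock P x.
Let C := C0 :\ x.

Let C0P : C0 \in P.
Proof. by apply: pblock_mem; rewrite (cover_partition partP) setU11. Qed.

Let xC0 : x \in C0.
Proof. by rewrite mem_pblock (cover_partition partP) setU11. Qed.

Lemma pblock_setD1_neq0 : C != set0.
Proof.
apply: contraNneq xPn => C0_eq; suff <- : C0 = [set x] by [].
by rewrite -(setD1K xC0) -/C C0_eq setU0.
Qed.

Lemma pblock_setD1_sub : C \subset D.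
Proof.
apply/subsetP => y; rewrite inE => /andP[yx /(subsetP (partitionS partP C0P))].
by rewrite inE (negbTE yx).
Qed.

Lemma pblock_setD1_notin : C \notin P :\ C0.
Proof.
have [y yC] := set0Pn _ pblock_setD1_neq0.
have tP := partition_trivIset partP.
apply/negP => /setD1P[/negP CC0 CP]; apply: CC0.
by rewrite -(def_pblock tP CP yC) (def_pblock tP C0P (subsetP (subD1set C0 x) _ yC)).
Qed.

Lemma partition_split_block : partition (split_block P).1 D.
Proof.
have := partitionU1 (partitionD1 partP C0P) pblock_setD1_neq0.
have -> : C :|: ((x |: D) :\: C0) = D.
  apply/setP => z; rewrite !inE; have [-> | zx] /= := eqVneq z x.
    by rewrite xC0 (negbTE xD).
  case zC0: (z \in C0) => //=; move/subsetP: (partitionS partP C0P) => /(_ z zC0).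
  by rewrite !inE (negbTE zx).
apply; rewrite -setI_eq0; apply/eqP/setP => z; rewrite !inE.
by case: (z \in C0); rewrite ?andbF ?andbT.
Qed.

Lemma card_split_block : #|(split_block P).1| = #|P|.
Proof. by rewrite cardsU1 pblock_setD1_notin (cardsD1 C0 P) C0P. Qed.

Lemma split_block_mem : (split_block P).2 \in (split_block P).1.
Proof. exact: setU11. Qed.

Lemma split_blockK : join_block (split_block P) = P.
Proof. by rewrite /join_block /= setD1K // (setU1K pblock_setD1_notin) setD1K. Qed.

End SplitBlock.

Lemma join_block_rpartitions m p : r <= v x ->
  p.1 \in rpartitions D m.+1 -> p.2 \in p.1 -> join_block p \in rpartitions (x |: D) m.+1.
Proof.
case: p => Q C rx; rewrite !inE /= => /and3P[partQ /eqP cardQ sepQ] CQ.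
rewrite partition_join_block // card_join_block // cardQ eqxx /=.
have xlow i : i \in x |: C -> v i < r -> i \in C.
  by rewrite !inE => /orP[/eqP-> | //]; rewrite ltnNge rx.
apply/low_separatedP => B i j /setU1P[-> iB jB ri rj | /setD1P[_ BQ]].
  move/low_separatedP: sepQ => sepQ.
  exact: sepQ C i j CQ (xlow i iB ri) (xlow j jB rj) ri rj.
by move/low_separatedP: sepQ; apply.
Qed.

Lemma split_block_rpartitions m P :
  P \in rpartitions (x |: D) m.+1 -> [set x] \notin P ->
  (split_block P).1 \in rpartitions D m.+1.
Proof.
rewrite !inE => /and3P[partP /eqP cardP sepP] xPn.
rewrite partition_split_block // card_split_block // cardP eqxx /=.
apply: low_separated_coarser sepP => B /setU1P[-> | /setD1P[_ BP]]; last by exists B.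
exists (pblock P x); last exact: subD1set.
by apply: pblock_mem; rewrite (cover_partition partP) setU11.
Qed.

Lemma rpartitions_x_alone m P : {in D, forall y, v y < v x} -> v x < r ->
  P \in rpartitions (x |: D) m -> [set x] \in P.
Proof.
rewrite inE => vD xr /and3P[partP _ /low_separatedP sepP]; apply: contraT => xPn.
have [y yC] := set0Pn _ (pblock_setD1_neq0 partP xPn).
have yr := ltn_trans (vD y (subsetP (pblock_setD1_sub partP) y yC)) xr.
move: yC; rewrite !inE => /andP[yx yC0].
have xcov : x \in cover P by rewrite (cover_partition partP) setU11.
suff eq_yx : y = x by rewrite eq_yx eqxx in yx.
by apply: sepP (pblock_mem xcov) yC0 _ yr xr; rewrite mem_pblock.
Qed.

Lemma card_rpartitions_not_alone m : r <= v x ->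
  #|rpartitions (x |: D) m.+1 :\: x_alone| = m.+1 * #|rpartitions D m.+1|.
Proof.
move=> rx; set W := [set p : {set {set T}} * {set T} |
                      (p.1 \in rpartitions D m.+1) && (p.2 \in p.1)].
have -> : rpartitions (x |: D) m.+1 :\: x_alone = join_block @: W.
  apply/setP => P; apply/idP/imsetP => [/setDP[PV] | [[Q C]]].
    rewrite inE => xPn; have partP : partition P (x |: D).
      by move: PV; rewrite inE => /and3P[].
    exists (split_block P); last by rewrite split_blockK.
    by rewrite inE split_block_rpartitions ?split_block_mem.
  rewrite inE => /andP[QV CQ] ->; rewrite in_setD join_block_rpartitions // andbT inE.
  by move: QV; rewrite inE => /and3P[partQ _ _]; rewrite singleton_notin_join_block.
rewrite card_in_imset; last first.
  apply: (can_in_inj (g := split_block)) => -[Q C].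
  by rewrite !inE => /andP[/and3P[partQ _ _] CQ]; apply: join_blockK.
rewrite card_pointed mulnC -sum_nat_const; apply: eq_bigr => Q.
by rewrite inE => /and3P[_ /eqP-> _].
Qed.

Lemma card_rpartitions_setU1 m : {in D, forall y, v y < v x} ->
  #|rpartitions (x |: D) m.+1| =
    (if r <= v x then m.+1 * #|rpartitions D m.+1| else 0) + #|rpartitions D m|.
Proof.
move=> vD; rewrite -(cardsID x_alone) card_rpartitions_singleton addnC; congr (_ + _).
case: leqP => rx; first exact: card_rpartitions_not_alone.
apply/eqP; rewrite cards_eq0; apply/eqP/setP => P; rewrite in_set0.
by apply/negbTE/setDP => -[PV]; rewrite inE (rpartitions_x_alone vD rx PV).
Qed.

End AddPoint.

End RestrictedPartitions.

Section Transport.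
Variables (T T' : finType) (f : T -> T') (f_inj : injective f).
Variables (v : T -> nat) (v' : T' -> nat) (r : nat).
Hypothesis v'f : forall i, v' (f i) = v i.

Let fblocks (P : {set {set T}}) := [set f @: (B : {set T}) | B in P].

Lemma low_separated_imset P : low_separated v' r (fblocks P) = low_separated v r P.
Proof.
apply/low_separatedP/low_separatedP => sepP.
  move=> B i j BP iB jB ri rj; apply: f_inj.
  by apply: (sepP (f @: B)); rewrite ?imset_f ?v'f.
move=> _ _ _ /imsetP[B BP ->] /imsetP[i iB ->] /imsetP[j jB ->].
by rewrite !v'f => ri rj; rewrite (sepP B i j).
Qed.

Lemma rpartitions_imset (D : {set T}) m P :
  (fblocks P \in rpartitions v' r (f @: D) m) = (P \in rpartitions v r D m).
Proof.
by rewrite !inE imset_partition // card_imset ?low_separated_imset //; apply: imset_inj.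
Qed.

Lemma card_rpartitions_imset (D : {set T}) m :
  #|rpartitions v' r (f @: D) m| = #|rpartitions v r D m|.
Proof.
have -> : rpartitions v' r (f @: D) m = fblocks @: rpartitions v r D m.
  apply/setP => P'; apply/idP/imsetP => [P'V | [P PV ->]]; last by rewrite rpartitions_imset.
  have partP' : partition P' (f @: D) by move: P'V; rewrite inE => /and3P[].
  suff eqP' : fblocks [set f @^-1: (B : {set T'}) | B in P'] = P'.
    by exists [set f @^-1: (B : {set T'}) | B in P'] => //; rewrite -rpartitions_imset eqP'.
  rewrite /fblocks -imset_comp -[RHS]imset_id; apply: eq_in_imset => B BP /=.
  have /subsetP sBD := partitionS partP' BP.
  apply/setP => y; apply/imsetP/idP => [[a] | yB]; first by rewrite inE => ? ->.
  by have /imsetP[a _ ya] := sBD y yB; exists a; rewrite // inE -ya.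
rewrite card_in_imset // => P1 P2 _ _; apply: imset_inj; exact: imset_inj.
Qed.

End Transport.

Lemma rstirling2E r n m :
  rstirling2 r n m = #|rpartitions (@nat_of_ord n) r [set: 'I_n] m|.
Proof.
apply: eq_card => P; rewrite !inE; case partP: (partition P _) => //=; congr (_ && _).
have tP := partition_trivIset partP.
have cov i : i \in cover P by rewrite (cover_partition partP) inE.
apply/forallP/low_separatedP => [sepP B i j BP iB jB ri rj | sepP i].
  apply/eqP; apply: contraT => ij; have := sepP i => /forallP/(_ j).
  by rewrite ri rj ij (def_pblock tP BP iB) (def_pblock tP BP jB) eqxx.
apply/forallP => j; apply/implyP => /and3P[ri rj]; apply: contra => /eqP eqij.
apply/eqP; apply: (sepP (pblock P i)) ri rj.
- exact: pblock_mem.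
- by rewrite mem_pblock.
- by rewrite eqij mem_pblock.
Qed.

Lemma setT_ord_max n :
  [set: 'I_n.+1] = ord_max |: [set lift ord_max i | i in [set: 'I_n]].
Proof.
apply/setP => i; rewrite !inE.
case: (unliftP ord_max i) => [j -> | ->]; last by rewrite eqxx.
by rewrite imset_f ?orbT.
Qed.

Lemma rstirling2_0m r m : rstirling2 r 0 m = (m == 0).
Proof.
by rewrite rstirling2E (_ : [set: 'I_0] = set0) ?card_rpartitions_set0 //; apply/setP => -[].
Qed.

Lemma rstirling2_S0 r n : rstirling2 r n.+1 0 = 0.
Proof. by rewrite rstirling2E setT_ord_max card_rpartitions_setU1_0. Qed.

Lemma rstirling2SS r n m : rstirling2 r n.+1 m.+1 =
  (if r <= n then m.+1 * rstirling2 r n m.+1 else 0) + rstirling2 r n m.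
Proof.
rewrite !rstirling2E setT_ord_max card_rpartitions_setU1.
- by rewrite !(card_rpartitions_imset (@lift_inj _ ord_max) (v := @nat_of_ord n))
       // => i; rewrite lift_max.
- by apply/imsetP => -[i _ /eqP]; rewrite eq_liftF.
- by move=> _ /imsetP[i _ ->]; rewrite lift_max.
Qed.

Lemma rstirling2_small r n m : n < m -> rstirling2 r n m = 0.
Proof.
elim: n m => [|n IHn] [|m] //= ltnm; first by rewrite rstirling2_0m.
by rewrite rstirling2SS !IHn ?muln0 ?if_same //; apply: ltnW.
Qed.

Lemma rstirling2_le r n m : n <= r -> rstirling2 r n m = (m == n).
Proof.
elim: n m => [|n IHn] m len; first by rewrite rstirling2_0m.
case: m => [|m]; first by rewrite rstirling2_S0.
by rewrite rstirling2SS leqNgt len /= IHn // ltnW.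
Qed.

Lemma rstirling2_lt r n m : m < r <= n -> rstirling2 r n m = 0.
Proof.
case/andP=> ltmr /subnKC <-; elim: (n - r) m ltmr => [|d IHd] m ltmr.
  by rewrite addn0 rstirling2_le // ltn_eqF.
rewrite addnS; case: m ltmr => [|m] ltmr; first by rewrite rstirling2_S0.
by rewrite rstirling2SS leq_addr !IHd ?muln0 // ltnW.
Qed.

Definition rfubini_term r n k := (k + r)`! * rstirling2 r (n + r) (k + r).

Lemma rfubini_term0n r k : rfubini_term r 0 k = (k == 0) * r`!.
Proof.
rewrite /rfubini_term add0n rstirling2_le //.
by case: k => [|k]; rewrite -[X in _ == X]add0n eqn_add2r ?mul1n ?muln1 ?muln0.
Qed.

Lemma rfubini_termS r n k : 0 < r -> rfubini_term r n.+1 k =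
  (k + r) * (rfubini_term r n k + (if k is k'.+1 then rfubini_term r n k' else 0)).
Proof.
case: r => [//|r] _; rewrite /rfubini_term addSn; case: k => [|k].
  rewrite add0n rstirling2SS leq_addl (@rstirling2_lt r.+1 _ r) ?ltnSn ?leq_addl //.
  by rewrite !addn0 mulnCA.
rewrite addSn rstirling2SS leq_addl factS.
move: (k + r.+1) (rstirling2 _ _ _) (rstirling2 _ _ _) => s S1 S2; nia.
Qed.

Lemma rfubini_term_small r n k : n < k -> rfubini_term r n k = 0.
Proof. by move=> ltnk; rewrite /rfubini_term rstirling2_small ?muln0 // ltn_add2r. Qed.

Lemma dvdn_rfubini_term r n k : 8 <= k + r -> 64 %| rfubini_term r n k.
Proof. by move=> le8; rewrite dvdn_mulr // (fact_split le8) dvdn_mulr. Qed.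

Lemma rfubini_mod64 r n : rfubini n r = \sum_(k < 8) rfubini_term r n k %[mod 64].
Proof.
have -> : rfubini n r = \sum_(0 <= k < n.+1 + 8) rfubini_term r n k.
  rewrite (big_cat_nat _ (leq_addr 8 n.+1)) // -[LHS]addn0; congr (_ + _); apply/esym.
  by rewrite big_nat big1 // => k /andP[ltnk _]; apply: rfubini_term_small.
rewrite (big_cat_nat _ (leq_addl n.+1 8)) //= big_mkord -modnDmr.
have /eqP-> : 64 %| \sum_(8 <= k < n.+1 + 8) rfubini_term r n k.
  rewrite big_nat; apply: dvdn_sum => k /andP[le8k _].
  by apply: dvdn_rfubini_term; apply: leq_trans le8k (leq_addr _ _).
by rewrite addn0.
Qed.

Lemma dvdn_rfubini n r : 8 <= r -> 64 %| rfubini n r.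
Proof.
move=> le8r; rewrite /rfubini big_nat; apply: dvdn_sum => k _.
by apply: dvdn_rfubini_term; apply: leq_trans le8r (leq_addl _ _).
Qed.

Definition rfubini_step r (s : seq nat) : seq nat :=
  [seq (k + r) * (nth 0 s k + (if k is k'.+1 then nth 0 s k' else 0)) %% 64 | k <- iota 0 8].

Definition rfubini_state r n := iter n (rfubini_step r) (r`! %% 64 :: nseq 7 0).

Lemma nth_rfubini_state r n k : 0 < r -> k < 8 ->
  nth 0 (rfubini_state r n) k = rfubini_term r n k %% 64.
Proof.
move=> r_gt0; elim: n k => [|n IHn] k ltk8.
  rewrite rfubini_term0n; case: k ltk8 => [|k] ltk8; first by rewrite mul1n.
  by rewrite mul0n mod0n; change (nth 0 (nseq 7 0) k = 0); rewrite nth_nseq if_same.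
rewrite /= (nth_map 0) ?size_iota // nth_iota // add0n rfubini_termS //.
case: k ltk8 => [|k] ltk8; first by rewrite IHn // !addn0 modnMmr.
by rewrite !IHn ?(ltnW ltk8) // -modnMmr modnDm modnMmr.
Qed.

Lemma rfubini_stateE r n : 0 < r -> rfubini n r = sumn (rfubini_state r n) %[mod 64].
Proof.
move=> r_gt0; have size_state : size (rfubini_state r n) = 8.
  by case: n => [|n] //=; rewrite size_map size_iota.
rewrite rfubini_mod64 -modn_summ sumnE (big_nth 0) size_state big_mkord.
by congr (_ %% _); apply: eq_bigr => k _; rewrite nth_rfubini_state.
Qed.

Lemma rfubini_state_periodic r n : 2 <= r <= 7 -> 5 <= n ->
  rfubini_state r (n + 8) = rfubini_state r n.
Proof.
have state13 : all (fun r => rfubini_state r 13 == rfubini_state r 5) (iota 2 6).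
  by vm_compute.
move=> r27 le5n; rewrite -(subnK le5n) -addnA /rfubini_state !iterD.
by congr iter; apply/eqP; move/allP: state13; apply; rewrite mem_iota.
Qed.

Lemma rfubini_state_sum_period2 r m n : 2 <= r <= 7 -> 3 <= m <= 6 -> m.-1 <= n ->
  sumn (rfubini_state r n.+2) = sumn (rfubini_state r n) %[mod 2 ^ m].
Proof.
move=> r27 m36; elim/ltn_ind: n => n IHn lemn.
have [ltn13 | le13n] := ltnP n 13.
  have check : all (fun r => all (fun m => all (fun n => (m.-1 <= n) ==>
      (sumn (rfubini_state r n.+2) == sumn (rfubini_state r n) %[mod 2 ^ m]))
    (iota 0 13)) (iota 3 4)) (iota 2 6) by vm_compute.
  have r_in : r \in iota 2 6 by rewrite mem_iota.
  have m_in : m \in iota 3 4 by rewrite mem_iota.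
  have n_in : n \in iota 0 13 by rewrite mem_iota.
  by move/allP/(_ r r_in)/allP/(_ m m_in)/allP/(_ n n_in)/implyP/(_ lemn)/eqP: check.
have le8n : 8 <= n by apply: leq_trans le13n.
have le5d : 5 <= n - 8 by rewrite leq_subRL.
have le_m5 : m.-1 <= 5 by case/andP: m36 => _; rewrite -subn1 leq_subLR.
rewrite -(subnK le8n) -[(n - 8 + 8).+2]/((n - 8).+2 + 8).
rewrite !rfubini_state_periodic ?(leqW (leqW le5d)) //.
have ltdn : n - 8 < n by rewrite ltn_subrL; apply: leq_trans le8n.
exact: IHn ltdn (leq_trans le_m5 le5d).
Qed.

Theorem theorem4p6 (r m n : nat) :
  2 <= r -> 3 <= m <= 6 -> m.-1 <= n ->
  rfubini n.+2 r = rfubini n r %[mod 2 ^ m].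
Proof.
move=> le2r m36 lemn.
have dvd_m64 : 2 ^ m %| 64 by case/andP: m36 => _ lem6; rewrite (dvdn_exp2l 2 lem6).
rewrite -(modn_dvdm (rfubini n.+2 r) dvd_m64) -(modn_dvdm (rfubini n r) dvd_m64).
have [ler7 | lt7r] := leqP r 7; last by rewrite !(eqP (dvdn_rfubini _ lt7r)).
rewrite !rfubini_stateE ?(ltnW le2r) // !modn_dvdm //.
by apply: rfubini_state_sum_period2; rewrite ?le2r.
Qed.
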